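(* Let $G_1$ and $G_2$ be connected reductive algebraic groups over an algebraically closed field $\mathbb{K}$ of characteristic zero, and let $G=G_1\times G_2$. Then $M(G)=M(G_1)\cap M(G_2)$.
   Context: For a connected affine algebraic group $G$ over $\mathbb{K}$, define $M(G)=\{n\in\mathbb{N}=\{1,2,\dots\} : (V^{\otimes n})^G\neq\{0\}\text{ for every nonzero finite-dimensional rational }G\text{-module }V\}$. *)

(* linear algebraic groups realised as Zariski-closed
   subgroups of GL_n(K), with rational representations given by regular
   matrix coefficients. *)
From HB Require Import structures.
From mathcomp Require Import all_boot all_order all_algebra.
From mathcomp Require Import mpoly.
Set Implicit Arguments. Unset Strict Implicit. Unset Printing Implicit Defensive.
Import Order.TTheory GRing.Theory Num.Theory.
Local Open Scope ring_scope.

Section LinearAlgebraicGroups.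
Variable K : fieldType.

Definition coords n (A : 'M[K]_n) : 'I_(n * n) -> K := fun i => mxvec A 0 i.

Definition peval n (p : {mpoly K[n * n]}) (A : 'M[K]_n) : K := p.@[coords A].

Definition zariski_closed n (G : 'M[K]_n -> Prop) : Prop :=
  exists s : seq {mpoly K[n * n]},
    forall A, G A <-> (A \in unitmx /\ forall p, p \in s -> peval p A = 0).

Definition subgroup_GL n (G : 'M[K]_n -> Prop) : Prop :=
  [/\ forall A, G A -> A \in unitmx,
      G 1%:M,
      forall A B, G A -> G B -> G (A *m B)
    & forall A, G A -> G (invmx A)].

Definition algebraic_group n (G : 'M[K]_n -> Prop) : Prop :=
  subgroup_GL G /\ zariski_closed G.

(* irreducible (= connected for algebraic groups): the vanishing ideal
   of G in K[x_ij] is prime (G is nonempty) *)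
Definition irreducible_set n (G : 'M[K]_n -> Prop) : Prop :=
  (exists A, G A) /\
  forall p q : {mpoly K[n * n]},
    (forall A, G A -> peval (p * q) A = 0) ->
    (forall A, G A -> peval p A = 0) \/ (forall A, G A -> peval q A = 0).

Definition connected_group n (G : 'M[K]_n -> Prop) : Prop :=
  algebraic_group G /\ irreducible_set G.

Definition unipotent_mx n (A : 'M[K]_n) : Prop :=
  exists k : nat, (A - 1%:M) ^+ k = 0.

(* reductive: the unipotent radical (largest closed connected normal
   unipotent subgroup) is trivial, i.e. every closed connected normal
   unipotent subgroup of G is trivial *)
Definition reductive_group n (G : 'M[K]_n -> Prop) : Prop :=
  algebraic_group G /\
  forall H : 'M[K]_n -> Prop,
    connected_group H ->
    (forall A, H A -> G A) ->
    (forall A B, G A -> H B -> H (invmx A *m B *m A)) ->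
    (forall A, H A -> unipotent_mx A) ->
    forall A, H A -> A = 1%:M.

(* regular function on G: restriction of an element of
   K[GL_n] = K[x_ij, 1/det] *)
Definition regular_on n (G : 'M[K]_n -> Prop) (f : 'M[K]_n -> K) : Prop :=
  exists (p : {mpoly K[n * n]}) (k : nat),
    forall A, G A -> f A = peval p A / (\det A) ^+ k.

Definition rational_rep n (G : 'M[K]_n -> Prop) m
    (rho : 'M[K]_n -> 'M[K]_m) : Prop :=
  [/\ forall i j, regular_on G (fun A => rho A i j),
      forall A, G A -> rho A \in unitmx,
      rho 1%:M = 1%:M
    & forall A B, G A -> G B -> rho (A *m B) = rho A *m rho B].

(* V^{(x) k} for V = K^m in coordinates: tensors indexed by k-tuples of
   basis indices, with the diagonal action of g *)
Definition tensor_act m k (g : 'M[K]_m) (T : {ffun {ffun 'I_k -> 'I_m} -> K})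
  : {ffun {ffun 'I_k -> 'I_m} -> K} :=
  [ffun i : {ffun 'I_k -> 'I_m} => \sum_(j : {ffun 'I_k -> 'I_m})
                (\prod_(t < k) g (i t) (j t)) * T j].

Definition has_nonzero_invariant n (G : 'M[K]_n -> Prop) m
    (rho : 'M[K]_n -> 'M[K]_m) (k : nat) : Prop :=
  exists T : {ffun {ffun 'I_k -> 'I_m} -> K},
    T != 0 /\ forall A, G A -> tensor_act (rho A) T = T.

Definition inM n (G : 'M[K]_n -> Prop) (k : nat) : Prop :=
  (0 < k)%N /\
  forall (m : nat) (rho : 'M[K]_n -> 'M[K]_m),
    (0 < m)%N -> rational_rep G rho -> has_nonzero_invariant G rho k.

Definition prod_group n1 n2 (G1 : 'M[K]_n1 -> Prop) (G2 : 'M[K]_n2 -> Prop)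
  : 'M[K]_(n1 + n2) -> Prop :=
  fun C => exists A B, [/\ G1 A, G2 B & C = block_mx A 0 0 B].

End LinearAlgebraicGroups.

From mathcomp Require Import all_boot all_order all_algebra.
From mathcomp Require Import mpoly ring.
From Stdlib Require Import ClassicalEpsilon.
Set Implicit Arguments. Unset Strict Implicit. Unset Printing Implicit Defensive.
Import GRing.Theory.
Local Open Scope ring_scope.

(* Only the group structure of G1 and G2 and the algebraic closedness of K
   matter.  Let V be a nonzero rational representation of G = G1 x G2.  A
   nonzero G1-stable subspace W of V of minimal dimension is an irreducible
   G1-module, and since G2 commutes with G1 it acts on H = Hom_G1(W, V) <> 0.
   By Schur's lemma the evaluation map W (x) H -> V is injective; it is
   G-equivariant.  If k lies in M(G1) and in M(G2), nonzero invariants T1 of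
   W^(x)k and T2 of H^(x)k give the nonzero invariant T1 (x) T2 of
   (W (x) H)^(x)k, whose image in V^(x)k is a nonzero G-invariant.
   Conversely a representation of a factor G_i is one of G through the
   projection G -> G_i. *)

Section RegularFunctions.
Variable K : fieldType.

Definition var_mx n : 'M[{mpoly K[n * n]}]_n := \matrix_(i, j) 'X_(mxvec_index i j).

Lemma eval_var_mx n (A : 'M[K]_n) : map_mx (meval (coords A)) (var_mx n) = A.
Proof. by apply/matrixP => i j; rewrite !mxE mevalXU /coords mxvecE. Qed.

Lemma peval_map_mx N n (M : 'M[{mpoly K[N * N]}]_n) (p : {mpoly K[n * n]}) :
  exists q : {mpoly K[N * N]}, forall A : 'M[K]_N,
    peval p (map_mx (meval (coords A)) M) = peval q A.
Proof.
exists (p \mPo [tuple mxvec M 0 i | i < n * n]) => A.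
rewrite /peval comp_mpoly_meval; apply: meval_eq => i.
by rewrite tnth_mktuple /coords -map_mxvec mxE.
Qed.

Definition det_poly n : {mpoly K[n * n]} := \det (var_mx n).

Lemma peval_det_poly n (A : 'M[K]_n) : peval (det_poly n) A = \det A.
Proof. by rewrite /peval /det_poly -det_map_mx eval_var_mx. Qed.

Section Closure.
Variables (n : nat) (G : 'M[K]_n -> Prop).
Hypothesis G_unit : forall A, G A -> A \in unitmx.

Let det_neq0 A : G A -> \det A != 0.
Proof. by move=> /G_unit; rewrite unitmxE unitfE. Qed.

Lemma eq_regular f g :
  (forall A, G A -> f A = g A) -> regular_on G f -> regular_on G g.
Proof. by move=> efg [p [k hp]]; exists p, k => A GA; rewrite -efg // hp. Qed.

Lemma regular_cst c : regular_on G (fun _ => c).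
Proof. by exists c%:MP, 0%N => A _; rewrite /peval mevalC expr0 divr1. Qed.

Lemma regular_add f g :
  regular_on G f -> regular_on G g -> regular_on G (fun A => f A + g A).
Proof.
move=> [p [k hp]] [q [l hq]].
exists (p * det_poly n ^+ l + q * det_poly n ^+ k), (k + l)%N => A GA.
rewrite hp // hq // /peval mevalD !mevalM !rmorphXn /= -!/(peval _ _) peval_det_poly.
have := det_neq0 GA; set d := \det A => d0.
by rewrite exprD; field; rewrite !expf_neq0.
Qed.

Lemma regular_mul f g :
  regular_on G f -> regular_on G g -> regular_on G (fun A => f A * g A).
Proof.
move=> [p [k hp]] [q [l hq]].
exists (p * q), (k + l)%N => A GA.
rewrite hp // hq // /peval mevalM -!/(peval _ _).
have := det_neq0 GA; set d := \det A => d0.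
by rewrite exprD; field; rewrite !expf_neq0.
Qed.

Lemma regular_sum (I : finType) (F : I -> 'M[K]_n -> K) :
  (forall i, regular_on G (F i)) -> regular_on G (fun A => \sum_i F i A).
Proof.
move=> regF; elim: (index_enum I) => [|i s IHs].
  by apply: eq_regular (regular_cst 0) => A _; rewrite big_nil.
by apply: eq_regular (regular_add (regF i) IHs) => A _; rewrite big_cons.
Qed.

Definition regular_mx m1 m2 (F : 'M[K]_n -> 'M[K]_(m1, m2)) :=
  forall i j, regular_on G (fun A => F A i j).

Lemma regular_mx_cst m1 m2 (C : 'M[K]_(m1, m2)) : regular_mx (fun _ => C).
Proof. by move=> i j; apply: regular_cst. Qed.

Lemma regular_mx_mul m1 m2 m3 (F : 'M[K]_n -> 'M[K]_(m1, m2))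
    (H : 'M[K]_n -> 'M[K]_(m2, m3)) :
  regular_mx F -> regular_mx H -> regular_mx (fun A => F A *m H A).
Proof.
move=> regF regH i j.
apply: eq_regular (regular_sum (fun l => regular_mul (regF i l) (regH l j))) => A _.
by rewrite mxE.
Qed.

Lemma regular_mx_tr m1 m2 (F : 'M[K]_n -> 'M[K]_(m1, m2)) :
  regular_mx F -> regular_mx (fun A => (F A)^T).
Proof. by move=> regF i j; apply: eq_regular (regF j i) => A _; rewrite mxE. Qed.

End Closure.

Definition poly_map N n (F : 'M[K]_N -> 'M[K]_n) :=
  exists M : 'M[{mpoly K[N * N]}]_n, forall A, F A = map_mx (meval (coords A)) M.

(* The factor [peval r A] clears the denominators [det (F A) ^+ k]. *)
Lemma regular_comp N n (G' : 'M[K]_N -> Prop) (G : 'M[K]_n -> Prop)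
    (F : 'M[K]_N -> 'M[K]_n) (r : {mpoly K[N * N]}) f :
  poly_map F ->
  (forall A, G' A -> A \in unitmx) ->
  (forall A, G' A -> G (F A)) ->
  (forall A, G' A -> \det A = \det (F A) * peval r A) ->
  regular_on G f -> regular_on G' (fun A => f (F A)).
Proof.
move=> [M FE] G'_unit G'G detF [p [k hp]].
have [q hq] := peval_map_mx M p.
exists (q * r ^+ k), k => A G'A.
have := G'_unit A G'A; rewrite unitmxE unitfE detF // mulf_eq0 negb_or.
case/andP=> d0 r0; rewrite hp; last exact: G'G.
rewrite {1}FE hq /peval mevalM rmorphXn /= -!/(peval _ _).
by rewrite exprMn; field; rewrite !expf_neq0.
Qed.

Lemma rational_rep_comp N n (G' : 'M[K]_N -> Prop) (G : 'M[K]_n -> Prop)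
    (F : 'M[K]_N -> 'M[K]_n) (r : {mpoly K[N * N]}) m (rho : 'M[K]_n -> 'M[K]_m) :
  poly_map F -> (forall A, G' A -> A \in unitmx) ->
  (forall A, G' A -> G (F A)) ->
  F 1%:M = 1%:M ->
  (forall A B, G' A -> G' B -> F (A *m B) = F A *m F B) ->
  (forall A, G' A -> \det A = \det (F A) * peval r A) ->
  rational_rep G rho -> rational_rep G' (fun A => rho (F A)).
Proof.
move=> polyF G'_unit G'G F1 FM detF [reg_rho rho_unit rho1 rhoM]; split.
- by move=> i j; exact: (regular_comp polyF G'_unit G'G detF (reg_rho i j)).
- by move=> A G'A; apply/rho_unit/G'G.
- by rewrite F1.
- by move=> A B G'A G'B; rewrite FM // rhoM //; apply: G'G.
Qed.

Lemma rational_rep_morph n (G : 'M[K]_n -> Prop) m (rho : 'M[K]_n -> 'M[K]_m) :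
  subgroup_GL G -> regular_mx G rho -> rho 1%:M = 1%:M ->
  (forall A B, G A -> G B -> rho (A *m B) = rho A *m rho B) -> rational_rep G rho.
Proof.
case=> G_unit _ _ G_inv reg_rho rho1 rhoM; split => // A GA.
have : rho A *m rho (invmx A) = 1%:M.
  by rewrite -rhoM ?mulmxV //; [apply: G_unit | apply: G_inv].
by case/mulmx1_unit.
Qed.

End RegularFunctions.

Section TensorPower.
Variables (R : comRingType) (k : nat).

Local Notation tensor I := {ffun {ffun 'I_k -> I} -> R}.

Definition tensor_map (I J : finType) (M : I -> J -> R) (T : tensor J) : tensor I :=
  [ffun i : {ffun 'I_k -> I} =>
     \sum_(j : {ffun 'I_k -> J}) (\prod_(t < k) M (i t) (j t)) * T j].

Lemma eq_tensor_map (I J : finType) (M M' : I -> J -> R) T :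
  (forall i j, M i j = M' i j) -> tensor_map M T = tensor_map M' T.
Proof.
move=> eM; apply/ffunP => i; rewrite !ffunE; apply: eq_bigr => j _.
by congr (_ * _); apply: eq_bigr => t _; rewrite eM.
Qed.

Lemma tensor_map_comp (I J L : finType) (M : I -> J -> R) (N : J -> L -> R) T :
  tensor_map M (tensor_map N T) = tensor_map (fun i l => \sum_j M i j * N j l) T.
Proof.
apply/ffunP => i; rewrite !ffunE.
under eq_bigr => j _ do rewrite ffunE big_distrr /=.
rewrite exchange_big /=; apply: eq_bigr => l _.
rewrite (bigA_distr_bigA (fun t j => M (i t) j * N j (l t))) /= big_distrl /=.
by apply: eq_bigr => j _; rewrite mulrA big_split.
Qed.

Lemma tensor_map0 (I J : finType) (M : I -> J -> R) : tensor_map M 0 = 0.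
Proof. by apply/ffunP => i; rewrite !ffunE big1 // => j _; rewrite ffunE mulr0. Qed.

Lemma tensor_map_id (I : finType) T : tensor_map (fun i j : I => (i == j)%:R) T = T.
Proof.
apply/ffunP => i; rewrite ffunE (bigD1 i) //=.
rewrite [X in X * _]big1 ?mul1r; last by move=> t _; rewrite eqxx.
rewrite big1 ?addr0 // => j /negPf neq_ji.
have [t neq_t] : exists t, i t != j t.
  apply/existsP; apply: contraFT neq_ji; rewrite negb_exists => /forallP eq_ij.
  by apply/eqP/ffunP => t; move: (eq_ij t); rewrite negbK => /eqP.
by rewrite (bigD1 t) //= (negPf neq_t) !mul0r.
Qed.

Lemma tensor_map_inj (I J : finType) (M : I -> J -> R) (L : J -> I -> R) T :
  (forall j j', \sum_i L j i * M i j' = (j == j')%:R) ->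
  tensor_map M T = 0 -> T = 0.
Proof.
move=> LM MT0; rewrite -(tensor_map_id T).
rewrite -(eq_tensor_map (M := fun j j' => \sum_i L j i * M i j')) => [|j j'].
  by rewrite -tensor_map_comp MT0 tensor_map0.
by rewrite LM.
Qed.

Lemma tensor_map_intertwine (I J : finType) (M : I -> I -> R) (N : I -> J -> R)
    (S : J -> J -> R) T :
  (forall i j, \sum_l M i l * N l j = \sum_l N i l * S l j) ->
  tensor_map M (tensor_map N T) = tensor_map N (tensor_map S T).
Proof. by move=> MN; rewrite !tensor_map_comp; apply: eq_tensor_map. Qed.

Definition tensor_pair (I1 I2 : finType) (T1 : tensor I1) (T2 : tensor I2) :
    tensor (I1 * I2) :=
  [ffun f : {ffun 'I_k -> I1 * I2} => T1 [ffun t => (f t).1] * T2 [ffun t => (f t).2]].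

Lemma tensor_map_pair (I1 I2 J1 J2 : finType) (M1 : I1 -> J1 -> R)
    (M2 : I2 -> J2 -> R) T1 T2 :
  tensor_map (fun (i : I1 * I2) (j : J1 * J2) => M1 i.1 j.1 * M2 i.2 j.2)
    (tensor_pair T1 T2) = tensor_pair (tensor_map M1 T1) (tensor_map M2 T2).
Proof.
apply/ffunP => f; rewrite !ffunE big_distrlr pair_bigA /=.
pose zip_ffun (p : {ffun 'I_k -> J1} * {ffun 'I_k -> J2}) : {ffun 'I_k -> J1 * J2} :=
  [ffun t => (p.1 t, p.2 t)].
pose unzip_ffun (g : {ffun 'I_k -> J1 * J2}) :=
  ([ffun t => (g t).1], [ffun t => (g t).2]).
rewrite (reindex zip_ffun) /=; last first.
  exists unzip_ffun => [[a b] _|g _]; rewrite /zip_ffun /unzip_ffun /=.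
    by congr pair; apply/ffunP => t; rewrite !ffunE.
  by apply/ffunP => t; rewrite !ffunE; case: (g t).
apply: eq_bigr => [[a b]] _ /=; rewrite ffunE.
have -> : [ffun t => (zip_ffun (a, b) t).1] = a by apply/ffunP => t; rewrite !ffunE.
have -> : [ffun t => (zip_ffun (a, b) t).2] = b by apply/ffunP => t; rewrite !ffunE.
rewrite big_split /=.
have -> : \prod_(t < k) M1 (f t).1 (zip_ffun (a, b) t).1 =
          \prod_(t < k) M1 ([ffun t => (f t).1] t) (a t).
  by apply: eq_bigr => t _; rewrite !ffunE.
have -> : \prod_(t < k) M2 (f t).2 (zip_ffun (a, b) t).2 =
          \prod_(t < k) M2 ([ffun t => (f t).2] t) (b t).
  by apply: eq_bigr => t _; rewrite !ffunE.
by ring.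
Qed.

End TensorPower.

Lemma tensor_actE (K : fieldType) k m (g : 'M[K]_m) T :
  tensor_act g T = tensor_map (k := k) g T.
Proof. by []. Qed.

Lemma ffun_neq0 (R : nmodType) (J : finType) (T : {ffun J -> R}) :
  T != 0 -> exists j, T j != 0.
Proof.
move=> T_neq0; apply/existsP; apply: contraNT T_neq0; rewrite negb_exists => /forallP T0.
by apply/eqP/ffunP => j; rewrite ffunE; apply/eqP; rewrite -[_ == _]negbK T0.
Qed.

Lemma tensor_pair_neq0 (R : idomainType) k (I1 I2 : finType) T1 T2 :
  T1 != 0 -> T2 != 0 -> @tensor_pair R k I1 I2 T1 T2 != 0.
Proof.
move=> /ffun_neq0 [a Ta] /ffun_neq0 [b Tb].
apply/eqP => /ffunP /(_ [ffun t => (a t, b t)]); rewrite !ffunE.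
have -> : [ffun t => ([ffun t0 => (a t0, b t0)] t).1] = a by apply/ffunP => t; rewrite !ffunE.
have -> : [ffun t => ([ffun t0 => (a t0, b t0)] t).2] = b by apply/ffunP => t; rewrite !ffunE.
by move/eqP; rewrite mulf_eq0 (negPf Ta) (negPf Tb).
Qed.

Definition asbool (P : Prop) : bool :=
  if excluded_middle_informative P then true else false.

Lemma asboolP (P : Prop) : reflect P (asbool P).
Proof. by rewrite /asbool; case: excluded_middle_informative => h; constructor. Qed.

Section LinearAlgebra.
Variable K : fieldType.

Definition lin_closed (V : lmodType K) (Q : V -> Prop) :=
  Q 0 /\ forall a u v, Q u -> Q v -> Q (a *: u + v).

Lemma lin_closed_comb N (Q : 'rV[K]_N -> Prop) r (B : 'M[K]_(r, N)) (x : 'rV_r) :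
  lin_closed Q -> (forall i, Q (row i B)) -> Q (x *m B).
Proof.
move=> [Q0 QD] QB; rewrite mulmx_sum_row.
elim: (index_enum _) => [|i s IHs]; first by rewrite big_nil.
by rewrite big_cons; apply: QD.
Qed.

Lemma lin_closed_basis N (Q : 'rV[K]_N -> Prop) : lin_closed Q ->
  exists r (B : 'M[K]_(r, N)), [/\ row_free B, forall i, Q (row i B)
     & forall v, Q v -> exists x : 'rV_r, v = x *m B].
Proof.
move=> linQ.
pose free_in r := exists B : 'M[K]_(r, N), row_free B /\ forall i, Q (row i B).
have free0 : exists r, asbool (free_in r).
  exists 0%N; apply/asboolP; exists 0; split; last by move=> [].
  by rewrite /row_free mxrank0.
have free_le r : asbool (free_in r) -> (r <= N)%N.
  by move=> /asboolP [B [freeB _]]; move/eqP: freeB => <-; apply: rank_leq_col.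
case: (ex_maxnP free0 free_le) => r /asboolP [B [freeB QB]] max_r.
exists r, B; split => // v Qv.
have [/submxP [x ->]|vNB] := boolP (v <= B)%MS; first by exists x.
suff : (r.+1 <= r)%N by rewrite ltnn.
apply/max_r/asboolP; exists (col_mx v B : 'M_(1 + r, N)); split.
  rewrite /row_free; apply/eqP/anti_leq; rewrite rank_leq_row /=.
  have sB : (B <= col_mx v B)%MS by rewrite -addsmxE addsmxSr.
  have := mxrank_leqif_sup sB; rewrite col_mx_sub submx_refl andbT (negPf vNB).
  by move=> [le ne]; move/eqP: freeB => rB; rewrite -{1}rB ltn_neqAle ne le.
move=> i; have [j|j] := split_ordP (i : 'I_(1 + r)) => ei.
  have -> : row i (col_mx v B : 'M_(1 + r, N)) = row (lshift r j) (col_mx v B).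
    by rewrite -ei.
  by rewrite rowKu (ord1 j); have -> : row 0 v = v by apply/rowP => a; rewrite mxE.
have -> : row i (col_mx v B : 'M_(1 + r, N)) = row (rshift 1 j) (col_mx v B).
  by rewrite -ei.
by rewrite rowKd.
Qed.

Lemma injective_left_inverse (m : nat) (J : finType) (N : 'I_m -> J -> K) :
  (forall x : J -> K, (forall i, \sum_j N i j * x j = 0) -> forall j, x j = 0) ->
  exists L : J -> 'I_m -> K, forall j j', \sum_i L j i * N i j' = (j == j')%:R.
Proof.
move=> injN.
pose A : 'M[K]_(#|J|, m) := \matrix_(a, i) N i (enum_val a).
have mulA (v : 'rV[K]_#|J|) i : (v *m A) 0 i = \sum_j N i j * v 0 (enum_rank j).
  rewrite mxE (reindex (@enum_rank J)) /=; last first.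
    by exists enum_val => a _; rewrite ?enum_rankK ?enum_valK.
  by apply: eq_bigr => j _; rewrite mxE enum_rankK mulrC.
have freeA : row_free A.
  rewrite -kermx_eq0; apply/eqP/row_matrixP => r; rewrite row0.
  have /sub_kermxP kerA0 : (row r (kermx A) <= kermx A)%MS by apply: row_sub.
  apply/rowP => a; rewrite [RHS]mxE -[a]enum_valK.
  apply: (injN (fun j => row r (kermx A) 0 (enum_rank j))) => i.
  by rewrite -mulA kerA0 mxE.
have [B BA] := row_freeP freeA.
exists (fun j i => B i (enum_rank j)) => j j'.
move/matrixP: BA => /(_ (enum_rank j') (enum_rank j)).
rewrite !mxE (inj_eq enum_rank_inj) eq_sym => <-.
by apply: eq_bigr => i _; rewrite mxE enum_rankK mulrC.
Qed.

Lemma eq_mx_mul_cV m n (A B : 'M[K]_(m, n)) : (forall u : 'cV_n, A *m u = B *m u) -> A = B.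
Proof.
move=> AB; apply/matrixP => i j.
by have := congr1 (fun M : 'cV_m => M i 0) (AB (delta_mx j 0)); rewrite -!colE !mxE.
Qed.

End LinearAlgebra.

Section IrreducibleSubrepresentation.
Variables (K : closedFieldType) (m : nat) (Gam : Type) (inG : Gam -> Prop)
  (R : Gam -> 'M[K]_m).

Definition stable_cols d (P : 'M[K]_(m, d)) :=
  forall g, inG g -> exists X : 'M_d, R g *m P = P *m X.

Lemma minimal_stable_cols : (0 < m)%N -> exists d (P : 'M[K]_(m, d)),
  [/\ (0 < d)%N, \rank P = d, stable_cols P &
      forall d' (P' : 'M[K]_(m, d')),
        (0 < d')%N -> \rank P' = d' -> stable_cols P' -> (d <= d')%N].
Proof.
move=> m_gt0.
pose stable_dim d := exists P : 'M[K]_(m, d), [/\ (0 < d)%N, \rank P = d & stable_cols P].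
have stable_m : exists d, asbool (stable_dim d).
  exists m; apply/asboolP; exists 1%:M; split => //; first exact: mxrank1.
  by move=> g _; exists (R g); rewrite mulmx1 mul1mx.
case: (ex_minnP stable_m) => d /asboolP [P [d_gt0 rankP stableP]] min_d.
exists d, P; split => // d' P' d'_gt0 rankP' stableP'.
by apply: min_d; apply/asboolP; exists P'.
Qed.

Variables (d : nat) (P : 'M[K]_(m, d)).
Hypotheses (d_gt0 : (0 < d)%N) (rankP : \rank P = d) (stableP : stable_cols P)
  (minP : forall d' (P' : 'M[K]_(m, d')),
            (0 < d')%N -> \rank P' = d' -> stable_cols P' -> (d <= d')%N).

Lemma stable_cols_left_inverse : exists L : 'M[K]_(d, m), L *m P = 1%:M.
Proof. by apply/row_fullP; rewrite /row_full rankP. Qed.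

Variable L : 'M[K]_(d, m).
Hypothesis LP : L *m P = 1%:M.

(* The action of [R] on the column space of [P], in the basis given by the
   columns of [P]. *)
Fact subrep_key : unit. Proof. by []. Qed.
Definition subrep g := locked_with subrep_key (L *m R g *m P).
Lemma subrepE g : subrep g = L *m R g *m P. Proof. by rewrite /subrep unlock. Qed.

Lemma subrepP g : inG g -> R g *m P = P *m subrep g.
Proof.
move=> Gg; have [X RP] := stableP Gg.
by rewrite subrepE -mulmxA RP; congr (_ *m _); rewrite mulmxA LP mul1mx.
Qed.

(* [Q] pulls back to a stable subspace of the column space of [P] of the
   same dimension, so the minimality of [P] forces [Q] to be everything. *)
Lemma subrep_irreducible (Q : 'cV[K]_d -> Prop) u0 :
  lin_closed Q -> (forall g u, inG g -> Q u -> Q (subrep g *m u)) ->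
  Q u0 -> u0 != 0 -> forall u, Q u.
Proof.
move=> [Q0 QD] Q_stable Qu0 u0_neq0.
pose Qt (w : 'rV[K]_d) := Q w^T.
have linQt : lin_closed Qt.
  split; first by rewrite /Qt trmx0.
  by move=> a u v; rewrite /Qt linearD linearZ /=; apply: QD.
have [r [B [freeB QtB spanB]]] := lin_closed_basis linQt.
have rankPB : \rank (P *m B^T) = r.
  rewrite -mxrank_tr trmx_mul trmxK mxrankMfree; first by move/eqP: freeB.
  by rewrite /row_free mxrank_tr rankP.
have r_gt0 : (0 < r)%N.
  case: r B freeB QtB spanB rankPB => // B _ _ spanB _.
  have [x u0E] : exists x, u0^T = x *m B by apply: spanB; rewrite /Qt trmxK.
  by move: u0_neq0; rewrite -trmx_eq0 u0E (thinmx0 x) mul0mx eqxx.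
have stablePB : stable_cols (P *m B^T).
  move=> g Gg; have /submxP [Y BY] : (B *m (subrep g)^T <= B)%MS.
    apply/row_subP => i; rewrite row_mul.
    have [x ->] : exists x, row i B *m (subrep g)^T = x *m B.
      by apply: spanB; rewrite /Qt trmx_mul trmxK; apply/Q_stable/QtB.
    exact: submxMl.
  exists Y^T; rewrite mulmxA subrepP // -!mulmxA; congr (_ *m _).
  by rewrite -[LHS]trmxK trmx_mul trmxK BY trmx_mul.
have fullB : row_full B.
  rewrite /row_full eqn_leq rank_leq_col /=; move/eqP: freeB => ->.
  exact: minP r_gt0 rankPB stablePB.
move=> u; have [x uE] : exists x, u^T = x *m B by apply/submxP; apply: submx_full.
by have := lin_closed_comb x linQt QtB; rewrite /Qt -uE trmxK.
Qed.

Lemma subrep_schur (F : 'M[K]_d) :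
  (forall g, inG g -> subrep g *m F = F *m subrep g) -> exists c, F = c%:M.
Proof.
move=> F_comm.
have [c c_root] : exists c, root (char_poly F^T) c.
  by apply/closed_rootP; rewrite size_char_poly; case: d d_gt0.
have : eigenvalue F^T c by rewrite eigenvalue_root_char.
case/eigenvalueP => v Fv v_neq0; exists c.
pose Q (u : 'cV[K]_d) := F *m u = c *: u.
have linQ : lin_closed Q.
  split; first by rewrite /Q mulmx0 scaler0.
  move=> a u w; rewrite /Q mulmxDr -scalemxAr => -> ->.
  by rewrite scalerDr !scalerA mulrC.
have Q_stable g u : inG g -> Q u -> Q (subrep g *m u).
  by move=> Gg Qu; rewrite /Q mulmxA -F_comm // -mulmxA Qu scalemxAr.
have Qv : Q v^T by rewrite /Q -[F]trmxK -trmx_mul Fv linearZ.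
have vT_neq0 : v^T != 0 by rewrite trmx_eq0.
have Q_all := subrep_irreducible linQ Q_stable Qv vT_neq0.
apply/matrixP => i j.
have := congr1 (fun M : 'cV_d => M i 0) (Q_all (delta_mx j 0)).
by rewrite -colE !mxE => ->; rewrite eqxx andbT mulr_natr.
Qed.

Variables (ne : nat) (phi : 'I_ne -> 'M[K]_(m, d)).
Hypotheses (phi_hom : forall j g, inG g -> R g *m phi j = phi j *m subrep g)
  (phi_free : forall c : 'I_ne -> K, \sum_j c j *: phi j = 0 -> forall j, c j = 0).

Definition relation_in (S : {set 'I_ne}) (V : 'I_ne -> 'cV[K]_d) :=
  (forall l, l \notin S -> V l = 0) /\ \sum_l phi l *m V l = 0.

Lemma eq_relation_in S V V' : V =1 V' -> relation_in S V -> relation_in S V'.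
Proof.
move=> eV [V0 sumV]; split => [l lS|]; first by rewrite -eV V0.
by rewrite -(eq_bigr _ (fun l _ => congr1 _ (eV l))).
Qed.

Lemma relation_in0 S : relation_in S (fun _ => 0).
Proof. by split => //; rewrite big1 // => l _; rewrite mulmx0. Qed.

Lemma relation_inD S a V W :
  relation_in S V -> relation_in S W -> relation_in S (fun l => a *: V l + W l).
Proof.
move=> [V0 sumV] [W0 sumW]; split => [l lS|].
  by rewrite V0 // W0 // scaler0 addr0.
under eq_bigr => l _ do rewrite mulmxDr -scalemxAr.
by rewrite big_split /= -scaler_sumr sumV sumW scaler0 addr0.
Qed.

Lemma relation_in_sum S (c : 'I_d -> K) (V : 'I_d -> 'I_ne -> 'cV[K]_d) :
  (forall a, relation_in S (V a)) -> relation_in S (fun l => \sum_a c a *: V a l).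
Proof.
move=> relV; elim: (index_enum 'I_d) => [|a s IHs].
  by apply: eq_relation_in (relation_in0 S) => l; rewrite big_nil.
by apply: eq_relation_in (relation_inD (c a) (relV a) IHs) => l; rewrite big_cons.
Qed.

Lemma relation_in_subrep S g V :
  inG g -> relation_in S V -> relation_in S (fun l => subrep g *m V l).
Proof.
move=> Gg [V0 sumV]; split => [l lS|]; first by rewrite V0 // mulmx0.
have -> : \sum_l phi l *m (subrep g *m V l) = R g *m \sum_l phi l *m V l.
  by rewrite mulmx_sumr; apply: eq_bigr => l _; rewrite mulmxA -phi_hom // -mulmxA.
by rewrite sumV mulmx0.
Qed.

Lemma relation_coord_onto S j U : relation_in S U -> U j != 0 ->
  forall u, exists V, relation_in S V /\ V j = u.
Proof.
move=> relU Uj_neq0; pose Q u := exists V, relation_in S V /\ V j = u.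
apply: (@subrep_irreducible Q (U j)) => //; last by exists U.
- split; first by exists (fun _ => 0); split => //; apply: relation_in0.
  move=> a u w [V [relV <-]] [W [relW <-]].
  by exists (fun l => a *: V l + W l); split => //; apply: relation_inD.
- move=> g u Gg [V [relV <-]].
  by exists (fun l => subrep g *m V l); split => //; apply: relation_in_subrep.
Qed.

(* A relation supported in [S] that is determined by its [j]-th coordinate
   has, in every slot, a G-endomorphism of that coordinate, hence a scalar by
   Schur's lemma; the freeness of [phi] then forces the relation to vanish. *)
Section RelationStep.
Variables (S : {set 'I_ne}) (j : 'I_ne).
Hypothesis relation_uniq : forall V, relation_in S V -> V j = 0 -> forall l, V l = 0.

Lemma relation_coord_mx :
  (forall u, exists V, relation_in S V /\ V j = u) ->
  exists F : 'I_ne -> 'M[K]_d, forall V, relation_in S V -> forall l, V l = F l *m V j.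
Proof.
move=> onto; have [Va Va_spec] := fin_all_exists (fun a : 'I_d => onto (delta_mx a 0)).
exists (fun l => \matrix_(b, a) Va a l b 0) => V relV l.
pose W l := V l - \sum_a V j a 0 *: Va a l.
have relW : relation_in S W.
  apply: eq_relation_in (relation_inD (-1) (relation_in_sum (V j ^~ 0)
    (fun a => (Va_spec a).1)) relV) => l'.
  by rewrite scaleN1r addrC.
have Wj0 : W j = 0.
  apply/eqP; rewrite subr_eq0; apply/eqP; rewrite [LHS]matrix_sum_delta.
  by apply: eq_bigr => a _; rewrite big_ord1 (Va_spec a).2.
have := relation_uniq relW Wj0 l; move/eqP; rewrite subr_eq0 => /eqP ->.
apply/matrixP => b c; rewrite (ord1 c) !mxE summxE; apply: eq_bigr => a _.
by rewrite !mxE mulrC.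
Qed.

Lemma relation_coord0 U : relation_in S U -> U j = 0.
Proof.
move=> relU; apply/eqP/negP => /negP Uj_neq0.
have onto := relation_coord_onto relU Uj_neq0.
have [F FE] := relation_coord_mx onto.
have F_comm l g : inG g -> subrep g *m F l = F l *m subrep g.
  move=> Gg; apply: eq_mx_mul_cV => u; have [V [relV <-]] := onto u.
  by rewrite -!mulmxA -FE // -(FE _ (relation_in_subrep Gg relV)).
have Fj : F j = 1%:M.
  by apply: eq_mx_mul_cV => u; have [V [relV <-]] := onto u; rewrite mul1mx -FE.
have sum_phiF : \sum_l phi l *m F l = 0.
  apply: eq_mx_mul_cV => u; have [V [relV <-]] := onto u.
  rewrite mulmx_suml mul0mx -[in RHS](proj2 relV); apply: eq_bigr => l _.
  by rewrite -mulmxA -FE.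
have [c Fc] := fin_all_exists (fun l => subrep_schur (F_comm l)).
have c0 : forall l, c l = 0.
  apply: phi_free; rewrite -[in RHS]sum_phiF; apply: eq_bigr => l _.
  by rewrite Fc mul_mx_scalar.
move/matrixP: Fj => /(_ (Ordinal d_gt0) (Ordinal d_gt0)).
by rewrite Fc c0 !mxE eqxx mulr1n => /eqP; rewrite eq_sym oner_eq0.
Qed.

End RelationStep.

Lemma relation_in_eq0 S V : relation_in S V -> forall l, V l = 0.
Proof.
move: {2}#|S| (leqnn #|S|) => s; elim: s S V => [|s IHs] S V.
  by rewrite leqn0 => /eqP /cards0_eq -> [V0 _] l; apply: V0; rewrite in_set0.
move=> S_le relV l; have [lS|lNS] := boolP (l \in S); last exact: relV.1.
apply: relation_coord0 relV => W [W0 sumW] Wl0; apply: (IHs (S :\ l)).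
  by move: S_le; rewrite (cardsD1 l S) lS.
split => // l'; rewrite in_setD1 negb_and negbK => /orP [/eqP -> //|]; exact: W0.
Qed.

Lemma eval_injective (U : 'I_ne -> 'cV[K]_d) :
  \sum_j phi j *m U j = 0 -> forall j, U j = 0.
Proof.
by move=> sumU; apply: (@relation_in_eq0 setT) => //; split => // l; rewrite in_setT.
Qed.

Lemma eval_injective_coord (x : 'I_d * 'I_ne -> K) :
  (forall i, \sum_p phi p.2 i p.1 * x p = 0) -> forall p, x p = 0.
Proof.
move=> x0 [a j]; pose U l : 'cV[K]_d := \col_b x (b, l).
suff /matrixP/(_ a 0) : U j = 0 by rewrite !mxE.
apply: eval_injective; apply/matrixP => i c; rewrite [RHS]mxE -(x0 i) summxE.
rewrite (eq_bigr (fun p => (fun b l => phi l i b * x (b, l)) p.1 p.2)) => [|[] //].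
rewrite -(pair_bigA _ (fun b l => phi l i b * x (b, l))) /= exchange_big /=.
by apply: eq_bigr => l _; rewrite mxE; apply: eq_bigr => b _; rewrite !mxE.
Qed.

End IrreducibleSubrepresentation.

Section ProductGroup.
Variables (K : fieldType) (n1 n2 : nat).
Variables (G1 : 'M[K]_n1 -> Prop) (G2 : 'M[K]_n2 -> Prop).
Hypotheses (G1_sub : subgroup_GL G1) (G2_sub : subgroup_GL G2).

Local Notation G := (prod_group G1 G2).

Definition embl (a : 'M[K]_n1) : 'M[K]_(n1 + n2) := block_mx a 0 0 1%:M.
Definition embr (b : 'M[K]_n2) : 'M[K]_(n1 + n2) := block_mx 1%:M 0 0 b.

Lemma prod_group_unit C : G C -> C \in unitmx.
Proof.
case: G1_sub G2_sub => [G1_unit _ _ _] [G2_unit _ _ _] [a [b [G1a G2b ->]]].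
by rewrite unitmxE det_ublock unitrM -!unitmxE G1_unit // G2_unit.
Qed.

Lemma embl_prod a : G1 a -> G (embl a).
Proof. by case: G2_sub => _ G2_1 _ _ G1a; exists a, 1%:M. Qed.

Lemma embr_prod b : G2 b -> G (embr b).
Proof. by case: G1_sub => _ G1_1 _ _ G2b; exists 1%:M, b. Qed.

Lemma block_mx_embl_embr a b : block_mx a 0 0 b = embl a *m embr b.
Proof. by rewrite mulmx_block !mulmx0 !mul0mx !addr0 !add0r mulmx1 mul1mx. Qed.

Lemma block_mx_embr_embl a b : block_mx a 0 0 b = embr b *m embl a.
Proof. by rewrite mulmx_block !mulmx0 !mul0mx !addr0 !add0r mulmx1 mul1mx. Qed.

Lemma poly_map_embl : poly_map embl.
Proof.
exists (block_mx (var_mx K n1) 0 0 1%:M) => a.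
by rewrite /embl map_block_mx eval_var_mx !map_mx0 map_scalar_mx rmorph1.
Qed.

Lemma poly_map_embr : poly_map embr.
Proof.
exists (block_mx 1%:M 0 0 (var_mx K n2)) => b.
by rewrite /embr map_block_mx eval_var_mx !map_mx0 map_scalar_mx rmorph1.
Qed.

Lemma poly_map_ulsubmx : poly_map (@ulsubmx K n1 n2 n1 n2).
Proof. by exists (ulsubmx (var_mx K (n1 + n2))) => C; rewrite map_ulsubmx eval_var_mx. Qed.

Lemma poly_map_drsubmx : poly_map (@drsubmx K n1 n2 n1 n2).
Proof. by exists (drsubmx (var_mx K (n1 + n2))) => C; rewrite map_drsubmx eval_var_mx. Qed.

Section RestrictToFactors.
Variables (m : nat) (rho : 'M[K]_(n1 + n2) -> 'M[K]_m).
Hypothesis rho_rep : rational_rep G rho.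

Lemma rational_rep_embl : rational_rep G1 (fun a => rho (embl a)).
Proof.
case: G1_sub => G1_unit _ G1M _.
apply: (rational_rep_comp (r := 1)) poly_map_embl G1_unit embl_prod _ _ _ rho_rep.
- by rewrite /embl -scalar_mx_block.
- by move=> a a' _ _; rewrite /embl mulmx_block !mulmx0 !mul0mx !addr0 !add0r mulmx1.
- by move=> a _; rewrite /embl det_ublock det1 /peval meval1 !mulr1.
Qed.

Lemma rational_rep_embr : rational_rep G2 (fun b => rho (embr b)).
Proof.
case: G2_sub => G2_unit _ G2M _.
apply: (rational_rep_comp (r := 1)) poly_map_embr G2_unit embr_prod _ _ _ rho_rep.
- by rewrite /embr -scalar_mx_block.
- by move=> b b' _ _; rewrite /embr mulmx_block !mulmx0 !mul0mx !addr0 !add0r mulmx1.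
- by move=> b _; rewrite /embr det_ublock det1 /peval meval1 mul1r mulr1.
Qed.

Lemma rational_rep_block a b : G1 a -> G2 b ->
  rho (block_mx a 0 0 b) = rho (embl a) *m rho (embr b) /\
  rho (block_mx a 0 0 b) = rho (embr b) *m rho (embl a).
Proof.
case: rho_rep => _ _ _ rhoM G1a G2b.
have Ga := embl_prod G1a; have Gb := embr_prod G2b.
by rewrite -!rhoM // -block_mx_embl_embr -block_mx_embr_embl.
Qed.

End RestrictToFactors.

Lemma rational_rep_ulsubmx m (rho1 : 'M[K]_n1 -> 'M[K]_m) :
  rational_rep G1 rho1 -> rational_rep G (fun C => rho1 (ulsubmx C)).
Proof.
have [q qE] := peval_map_mx (drsubmx (var_mx K (n1 + n2))) (det_poly K n2).
apply: (rational_rep_comp (r := q)) poly_map_ulsubmx prod_group_unit _ _ _ _.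
- by move=> C [a [b [G1a G2b ->]]]; rewrite block_mxKul.
- by rewrite (scalar_mx_block n1 n2) block_mxKul.
- move=> C C' [a [b [G1a G2b ->]]] [a' [b' [G1a' G2b' ->]]].
  by rewrite mulmx_block !block_mxKul mulmx0 addr0.
- move=> C [a [b [G1a G2b ->]]].
  by rewrite -qE map_drsubmx eval_var_mx peval_det_poly block_mxKul block_mxKdr det_ublock.
Qed.

Lemma rational_rep_drsubmx m (rho2 : 'M[K]_n2 -> 'M[K]_m) :
  rational_rep G2 rho2 -> rational_rep G (fun C => rho2 (drsubmx C)).
Proof.
have [q qE] := peval_map_mx (ulsubmx (var_mx K (n1 + n2))) (det_poly K n1).
apply: (rational_rep_comp (r := q)) poly_map_drsubmx prod_group_unit _ _ _ _.
- by move=> C [a [b [G1a G2b ->]]]; rewrite block_mxKdr.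
- by rewrite (scalar_mx_block n1 n2) block_mxKdr.
- move=> C C' [a [b [G1a G2b ->]]] [a' [b' [G1a' G2b' ->]]].
  by rewrite mulmx_block !block_mxKdr mulmx0 add0r.
- move=> C [a [b [G1a G2b ->]]].
  rewrite -qE map_ulsubmx eval_var_mx peval_det_poly block_mxKul block_mxKdr.
  by rewrite det_ublock mulrC.
Qed.

Lemma inM_prodl k : inM G k -> inM G1 k.
Proof.
move=> [k_gt0 invG]; split => // m rho1 m_gt0 rho1_rep.
have [T [T_neq0 T_inv]] := invG m _ m_gt0 (rational_rep_ulsubmx rho1_rep).
exists T; split => // a G1a.
by have := T_inv _ (embl_prod G1a); rewrite /embl block_mxKul.
Qed.

Lemma inM_prodr k : inM G k -> inM G2 k.
Proof.
move=> [k_gt0 invG]; split => // m rho2 m_gt0 rho2_rep.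
have [T [T_neq0 T_inv]] := invG m _ m_gt0 (rational_rep_drsubmx rho2_rep).
exists T; split => // b G2b.
by have := T_inv _ (embr_prod G2b); rewrite /embr block_mxKdr.
Qed.

End ProductGroup.

Section ProductRepresentation.
Variable K : closedFieldType.

Lemma subrep_rational n (G : 'M[K]_n -> Prop) m (R : 'M[K]_n -> 'M[K]_m) d
    (P : 'M[K]_(m, d)) L :
  subgroup_GL G -> rational_rep G R -> stable_cols G R P -> L *m P = 1%:M ->
  rational_rep G (subrep R P L).
Proof.
move=> G_sub [reg_R _ R1 RM] stableP LP; have [G_unit _ _ _] := G_sub.
apply: rational_rep_morph => //.
- move=> i j; apply: eq_regular (regular_mx_mul G_unit
    (regular_mx_mul G_unit (regular_mx_cst G L) reg_R) (regular_mx_cst G P) i j) => g _.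
  by rewrite subrepE.
- by rewrite subrepE R1 mulmx1 LP.
- move=> g h Gg Gh; have := subrepP stableP LP Gh.
  by rewrite !subrepE RM // !mulmxA => RP; rewrite -(mulmxA _ (R h)) RP !mulmxA.
Qed.

Section HomRepresentation.
Variables (n : nat) (G : 'M[K]_n -> Prop) (m d ne : nat)
  (R : 'M[K]_n -> 'M[K]_m) (B : 'M[K]_(ne, m * d)).
Hypotheses (G_sub : subgroup_GL G) (R_rep : rational_rep G R) (freeB : row_free B).

(* The rows of [B], reshaped by [vec_mx], span a space of m x d matrices
   stable under left multiplication by [R]; [hom_rep] is that action in
   this basis. *)
Definition hom_basis (j : 'I_ne) : 'M[K]_(m, d) := vec_mx (row j B).

Hypothesis stableB : forall b j, G b -> (mxvec (R b *m hom_basis j) <= B)%MS.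

Definition hom_coef b : 'M[K]_(ne, m * d) := \matrix_(j, c) mxvec (R b *m hom_basis j) 0 c.

Definition hom_rep b : 'M[K]_ne := (hom_coef b *m pinvmx B)^T.

Lemma mxvec_hom_comb (c : 'I_ne -> K) :
  mxvec (\sum_l c l *: hom_basis l) = (\row_l c l) *m B.
Proof.
rewrite linear_sum mulmx_sum_row; apply: eq_bigr => l _.
by rewrite linearZ /= vec_mxK mxE.
Qed.

Lemma hom_basis_free (c : 'I_ne -> K) :
  \sum_l c l *: hom_basis l = 0 -> forall l, c l = 0.
Proof.
move=> c0 l; have : (\row_l c l) *m B = 0 *m B.
  by rewrite -mxvec_hom_comb c0 mul0mx linear0.
by move/(row_free_inj freeB)/rowP/(_ l); rewrite !mxE.
Qed.

Lemma hom_basis_coef_inj (c c' : 'I_ne -> K) :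
  \sum_l c l *: hom_basis l = \sum_l c' l *: hom_basis l -> c =1 c'.
Proof.
move=> cc' l; apply/eqP; rewrite -subr_eq0; apply/eqP.
apply: (hom_basis_free (c := fun l => c l - c' l)).
by under eq_bigr => i _ do rewrite scalerBl; rewrite sumrB cc' subrr.
Qed.

Lemma hom_repP b j : G b -> R b *m hom_basis j = \sum_l hom_rep b l j *: hom_basis l.
Proof.
move=> Gb; apply: (can_inj mxvecK); rewrite mxvec_hom_comb.
have coefB : (hom_coef b <= B)%MS.
  apply/row_subP => i; have -> : row i (hom_coef b) = mxvec (R b *m hom_basis i).
    by apply/rowP => c; rewrite !mxE.
  exact: stableB.
have -> : \row_l hom_rep b l j = row j (hom_coef b *m pinvmx B).
  by apply/rowP => l; rewrite !mxE.
by rewrite -row_mul mulmxKpV //; apply/rowP => c; rewrite !mxE.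
Qed.

Lemma hom_rep_rational : rational_rep G hom_rep.
Proof.
have [reg_R _ R1 RM] := R_rep; have [G_unit G1 GM _] := G_sub.
apply: rational_rep_morph => //.
- have reg_coef : regular_mx G hom_coef.
    move=> j' c; case/mxvec_indexP: c => i a.
    apply: eq_regular (regular_mx_mul G_unit reg_R (regular_mx_cst G (hom_basis j')) i a).
    by move=> b _; rewrite [in RHS]mxE mxvecE.
  exact: regular_mx_tr (regular_mx_mul G_unit reg_coef (regular_mx_cst G _)).
- apply/matrixP => l j; move: l; apply: hom_basis_coef_inj.
  rewrite -hom_repP // R1 mul1mx (bigD1 j) //= mxE eqxx scale1r big1 ?addr0 //.
  by move=> i /negPf ij; rewrite mxE ij scale0r.
- move=> b b' Gb Gb'; apply/matrixP => p j; move: p; apply: hom_basis_coef_inj.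
  have Gbb' := GM _ _ Gb Gb'.
  rewrite -hom_repP // RM // -mulmxA hom_repP // mulmx_sumr.
  under eq_bigr => l _ do rewrite -scalemxAr hom_repP // scaler_sumr.
  rewrite exchange_big /=; apply: eq_bigr => q _.
  rewrite mxE scaler_suml; apply: eq_bigr => l _.
  by rewrite scalerA mulrC.
Qed.

End HomRepresentation.

Lemma hom_space_basis n1 n2 (G1 : 'M[K]_n1 -> Prop) (G2 : 'M[K]_n2 -> Prop) m d
    (R1 : 'M[K]_n1 -> 'M[K]_m) (R2 : 'M[K]_n2 -> 'M[K]_m) (S : 'M[K]_n1 -> 'M[K]_d)
    (P : 'M[K]_(m, d)) :
  P != 0 -> (forall a, G1 a -> R1 a *m P = P *m S a) ->
  (forall a b, G1 a -> G2 b -> R1 a *m R2 b = R2 b *m R1 a) ->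
  exists ne (B : 'M[K]_(ne, m * d)), [/\ (0 < ne)%N, row_free B,
    forall j a, G1 a -> R1 a *m hom_basis B j = hom_basis B j *m S a &
    forall b j, G2 b -> (mxvec (R2 b *m hom_basis B j) <= B)%MS].
Proof.
move=> P_neq0 R1P R12.
pose hom_G1 (v : 'rV[K]_(m * d)) := forall a, G1 a -> R1 a *m vec_mx v = vec_mx v *m S a.
have lin_hom : lin_closed hom_G1.
  split=> [a _|c u v hu hv a G1a]; first by rewrite linear0 mulmx0 mul0mx.
  rewrite linearD linearZ /= mulmxDr mulmxDl -scalemxAr -scalemxAl.
  by rewrite hu // hv.
have [ne [B [freeB homB spanB]]] := lin_closed_basis lin_hom.
exists ne, B; split => // [|b j G2b].
  have PB : (mxvec P <= B)%MS by apply/submxP; apply: spanB => a; rewrite mxvecK; apply: R1P.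
  rewrite -(eqP freeB) (leq_trans _ (mxrankS PB)) //.
  by rewrite lt0n mxrank_eq0 mxvec_eq0.
apply/submxP; apply: spanB => a G1a.
by rewrite mxvecK mulmxA R12 // -mulmxA homB // mulmxA.
Qed.

Lemma eval_coord_intertwine m d ne (phi : 'I_ne -> 'M[K]_(m, d)) (A B : 'M[K]_m)
    (S1 : 'M[K]_d) (S2 : 'M[K]_ne) :
  (forall j, A *m phi j = phi j *m S1) ->
  (forall j, B *m phi j = \sum_l S2 l j *: phi l) ->
  forall i (p : 'I_d * 'I_ne), \sum_l (A *m B) i l * phi p.2 l p.1 =
    \sum_q phi q.2 i q.1 * (S1 q.1 p.1 * S2 q.2 p.2).
Proof.
move=> A_phi B_phi i [c j] /=.
have -> : \sum_l (A *m B) i l * phi j l c = (A *m B *m phi j) i c by rewrite mxE.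
rewrite -mulmxA B_phi mulmx_sumr summxE.
rewrite (eq_bigr (fun q => (fun q1 q2 => phi q2 i q1 * (S1 q1 c * S2 q2 j)) q.1 q.2))
  => [|[] //].
rewrite -(pair_bigA _ (fun q1 q2 => phi q2 i q1 * (S1 q1 c * S2 q2 j))) /= exchange_big /=.
apply: eq_bigr => l _; rewrite -scalemxAr A_phi [LHS]mxE [X in _ * X]mxE big_distrr /=.
by apply: eq_bigr => q _; ring.
Qed.

End ProductRepresentation.

Lemma prod_rep_invariant (K : closedFieldType) n1 n2 (G1 : 'M[K]_n1 -> Prop)
    (G2 : 'M[K]_n2 -> Prop) m (rho : 'M[K]_(n1 + n2) -> 'M[K]_m) k :
  subgroup_GL G1 -> subgroup_GL G2 ->
  rational_rep (prod_group G1 G2) rho -> (0 < m)%N -> inM G1 k -> inM G2 k ->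
  has_nonzero_invariant (prod_group G1 G2) rho k.
Proof.
move=> G1_sub G2_sub rho_rep m_gt0 [_ inv1] [_ inv2].
pose R1 a := rho (embl n2 a); pose R2 b := rho (embr n1 b).
have R1_rep : rational_rep G1 R1 := rational_rep_embl G1_sub G2_sub rho_rep.
have R2_rep : rational_rep G2 R2 := rational_rep_embr G1_sub G2_sub rho_rep.
have R12 a b : G1 a -> G2 b -> R1 a *m R2 b = R2 b *m R1 a.
  by move=> G1a G2b; have [<- <-] := rational_rep_block G1_sub G2_sub rho_rep G1a G2b.
have [d [P [d_gt0 rankP stableP minP]]] := minimal_stable_cols G1 R1 m_gt0.
have [L LP] := stable_cols_left_inverse rankP.
pose s1 := subrep R1 P L.
have [T1 [T1_neq0 T1_inv]] := inv1 d s1 d_gt0 (subrep_rational G1_sub R1_rep stableP LP).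
have P_neq0 : P != 0 by rewrite -mxrank_eq0 rankP -lt0n.
have [ne [B [ne_gt0 freeB phi_hom stableB]]] :=
  hom_space_basis P_neq0 (subrepP stableP LP) R12.
pose phi := hom_basis B.
have s2_rep := hom_rep_rational G2_sub R2_rep freeB stableB.
have [T2 [T2_neq0 T2_inv]] := inv2 ne (hom_rep R2 B) ne_gt0 s2_rep.
(* [N] is the evaluation map W (x) H -> V in coordinates. *)
pose N (i : 'I_m) (p : 'I_d * 'I_ne) := phi p.2 i p.1.
have [Linv LinvN] : exists Linv, forall p q, \sum_i Linv p i * N i q = (p == q)%:R.
  apply: injective_left_inverse; apply: eval_injective_coord phi_hom _ => //.
  exact: hom_basis_free.
exists (tensor_map N (tensor_pair T1 T2)); split.
  apply/eqP => /(tensor_map_inj LinvN) /eqP; apply/negP; exact: tensor_pair_neq0.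
move=> C [a [b [G1a G2b ->]]].
rewrite tensor_actE (proj1 (rational_rep_block G1_sub G2_sub rho_rep G1a G2b)).
rewrite (tensor_map_intertwine (S := fun q p => s1 a q.1 p.1 * hom_rep R2 B b q.2 p.2)).
  by rewrite tensor_map_pair -!tensor_actE T1_inv // T2_inv.
apply: eval_coord_intertwine => j; first exact: phi_hom.
exact: (hom_repP stableB j G2b).
Qed.

Unset Implicit Arguments.

Theorem proposition3 (K : closedFieldType) (hchar : [pchar K] =i pred0)
  (n1 n2 : nat) (G1 : 'M[K]_n1 -> Prop) (G2 : 'M[K]_n2 -> Prop) :
  connected_group G1 -> reductive_group G1 ->
  connected_group G2 -> reductive_group G2 ->
  forall k : nat,
    inM (prod_group G1 G2) k <-> (inM G1 k /\ inM G2 k).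
Proof.
move=> [[G1_sub _] _] _ [[G2_sub _] _] _ k; split.
- move=> inMG; split; first exact: (inM_prodl G1_sub G2_sub inMG).
  exact: (inM_prodr G1_sub G2_sub inMG).
- move=> [inMG1 inMG2]; split; first by case: inMG1.
  by move=> m rho m_gt0 rho_rep; exact: prod_rep_invariant.
Qed.
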